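(* Let $(\mathcal{L},\mathrm{Cn},\mathfrak{M})$ be an ideal logical system and let $\mathrm{FR}:2^{\mathfrak{M}}\to\mathcal{P}_{fin}(\mathcal{L})$ be a function with $\mathrm{Mod}(\mathrm{FR}(\mathbb{M}))=\mathbb{M}$ for every $\mathbb{M}\subseteq\mathfrak{M}$. Define $\mathcal{E}(\mathcal{B},M)\coloneqq\mathrm{FR}(\mathrm{Mod}(\mathcal{B})\cup[M]^{\mathcal{L}})$ for $\mathcal{B}\in\mathcal{P}_{fin}(\mathcal{L})$ and $M\in\mathfrak{M}$. Then for every $\mathcal{B}\in\mathcal{P}_{fin}(\mathcal{L})$ and $M\in\mathfrak{M}$: (success) $M\in\mathrm{Mod}(\mathcal{E}(\mathcal{B},M))$; (persistence) $\mathrm{Mod}(\mathcal{B})\subseteq\mathrm{Mod}(\mathcal{E}(\mathcal{B},M))$; (vacuity) if $M\in\mathrm{Mod}(\mathcal{B})$ then $\mathrm{Mod}(\mathcal{E}(\mathcal{B},M))=\mathrm{Mod}(\mathcal{B})$; (extensionality) if $M\equiv^{\mathcal{L}}M'$ then $\mathcal{E}(\mathcal{B},M)=\mathcal{E}(\mathcal{B},M')$.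
   Context: $\mathcal{L}$ is a language (set of formulae), $\mathfrak{M}$ a fixed set of models with a satisfaction relation $\models$ between models and formulae, and $\mathrm{Cn}$ a Tarskian consequence operator on $\mathcal{L}$. $\mathcal{P}_{fin}(\mathcal{L})$ is the set of finite subsets of $\mathcal{L}$. For $\mathcal{B}\subseteq\mathcal{L}$, $\mathrm{Mod}(\mathcal{B})=\{M\in\mathfrak{M}\mid M\models\varphi$ for all $\varphi\in\mathcal{B}\}$. $M\equiv^{\mathcal{L}}M'$ iff for all $\varphi\in\mathcal{L}$, $M\models\varphi$ iff $M'\models\varphi$; $[M]^{\mathcal{L}}=\{M'\in\mathfrak{M}\mid M'\equiv^{\mathcal{L}}M\}$. $(\mathcal{L},\mathrm{Cn},\mathfrak{M})$ is an ideal logical system if (1) for all $\mathcal{B}\subseteq\mathcal{L}$, $\varphi\in\mathcal{L}$: $\varphi\in\mathrm{Cn}(\mathcal{B})$ iff $\mathrm{Mod}(\mathcal{B})\subseteq\mathrm{Mod}(\{\varphi\})$, and (2) for every $\mathbb{M}\subseteq\mathfrak{M}$ there is a finite $\mathcal{B}\subseteq\mathcal{L}$ with $\mathrm{Mod}(\mathcal{B})=\mathbb{M}$. *)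

From Stdlib Require Import List.

Definition set (X : Type) := X -> Prop.
Definition subset {X} (A B : set X) : Prop := forall x, A x -> B x.

Definition finite_set {X} (A : set X) : Prop :=
  exists l : list X, forall x, A x <-> In x l.

Definition Mod {L Mdl : Type} (sat : Mdl -> L -> Prop) (B : set L) : set Mdl :=
  fun M => forall phi, B phi -> sat M phi.

Definition lequiv {L Mdl : Type} (sat : Mdl -> L -> Prop) (M M' : Mdl) : Prop :=
  forall phi, sat M phi <-> sat M' phi.
Definition eqclass {L Mdl : Type} (sat : Mdl -> L -> Prop) (M : Mdl) : set Mdl :=
  fun M' => lequiv sat M' M.

Definition union {X} (A B : set X) : set X := fun x => A x \/ B x.

Definition tarskian {L : Type} (Cn : set L -> set L) : Prop :=
  (forall B, subset B (Cn B)) /\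
  (forall B B', subset B B' -> subset (Cn B) (Cn B')) /\
  (forall B, Cn (Cn B) = Cn B).

Definition ideal_system {L Mdl : Type} (sat : Mdl -> L -> Prop) (Cn : set L -> set L) : Prop :=
  (forall (B : set L) (phi : L), Cn B phi <-> subset (Mod sat B) (Mod sat (fun psi => psi = phi))) /\
  (forall MM : set Mdl, exists B : set L, finite_set B /\ Mod sat B = MM).

(* Since Mod (FR MM) = MM, the models of E(B, M) are exactly Mod(B) ∪ [M]^L, and all four
   postulates are facts about this union: M lies in its own class, Mod(B) is one of the two
   parts, the class of a model of B is already contained in Mod(B), and equivalent models have
   the same class. *)
From Stdlib Require Import FunctionalExtensionality PropExtensionality.

Lemma set_ext {X : Type} (A B : set X) : (forall x, A x <-> B x) -> A = B.
Proof.
  intros HAB; apply functional_extensionality; intros x.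
  apply propositional_extensionality, HAB.
Qed.

Lemma subset_union_l {X : Type} (A B : set X) : subset A (union A B).
Proof. intros x Hx; left; exact Hx. Qed.

Lemma union_idPl {X : Type} (A B : set X) : subset B A -> union A B = A.
Proof.
  intros HBA; apply set_ext; intros x; split.
  - intros [Hx | Hx]; [exact Hx | exact (HBA x Hx)].
  - apply subset_union_l.
Qed.

Section Equivalence.

Context {L Mdl : Type} (sat : Mdl -> L -> Prop).

Lemma eqclass_refl (M : Mdl) : eqclass sat M M.
Proof. intros phi; reflexivity. Qed.

Lemma eqclass_sub_Mod (B : set L) (M : Mdl) :
  Mod sat B M -> subset (eqclass sat M) (Mod sat B).
Proof. intros HM M' HM' phi Hphi; apply (HM' phi), HM, Hphi. Qed.

Lemma eqclass_lequiv (M M' : Mdl) : lequiv sat M M' -> eqclass sat M = eqclass sat M'.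
Proof.
  intros HMM'; apply set_ext; intros N; split; intros HN phi;
    rewrite (HN phi); [apply HMM' | symmetry; apply HMM'].
Qed.

End Equivalence.

Theorem mainTheorem8 (L Mdl : Type) (sat : Mdl -> L -> Prop) (Cn : set L -> set L)
  (HCn : tarskian Cn) (Hideal : ideal_system sat Cn)
  (FR : set Mdl -> set L)
  (HFRfin : forall MM : set Mdl, finite_set (FR MM))
  (HFR : forall MM : set Mdl, Mod sat (FR MM) = MM) :
  let E := fun (B : set L) (M : Mdl) => FR (union (Mod sat B) (eqclass sat M)) in
  forall (B : set L) (M : Mdl), finite_set B ->
    Mod sat (E B M) M /\
    subset (Mod sat B) (Mod sat (E B M)) /\
    (Mod sat B M -> Mod sat (E B M) = Mod sat B) /\
    (forall M' : Mdl, lequiv sat M M' -> E B M = E B M').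
Proof.
  intros E B M _; unfold E; rewrite HFR.
  split; [| split; [| split]].
  - right; apply eqclass_refl.
  - apply subset_union_l.
  - intros HM; apply union_idPl, eqclass_sub_Mod, HM.
  - intros M' HMM'; rewrite (eqclass_lequiv sat M M' HMM'); reflexivity.
Qed.
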